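(* Consider the boundary driven Kawasaki process on $\{0,1\}^N$ with $N\geq 5$ and $\mu_L>\kappa>0>\mu_R$, $|\mu_R|>\kappa$. For $x\in\mathcal{P}$, let $\mathcal{A}_x$ be the set consisting of $x$ and all its preferred successors. Then $\mathcal{A}_x$ is an attractor, and $\mathcal{A}_x\cap\mathcal{A}_y=\emptyset$ for all $y\in\mathcal{P}$ with $y\neq x$.
   Context: Configurations $x\in\{0,1\}^N$; energy $E(x)=-\kappa\sum_{i=1}^{N-1}x(i)x(i+1)$. $x^{i,j}$: occupations of $i,j$ exchanged; $x^i$ ($i\in\{1,N\}$): occupation of $i$ flipped. Transitions: for $|i-j|=1$, $x(i)\neq x(j)$, $x\to x^{i,j}$ at rate $\exp[-\frac\beta2(E(x^{i,j})-E(x))]$; for $i\in\{1,N\}$, $x\to x^i$ at rate $\exp[\frac{\beta\mu_i}{2}(1-2x(i))]\exp[-\frac\beta2(E(x^i)-E(x))]$, $\mu_1=\mu_L$, $\mu_N=\mu_R$. Two configurations are adjacent if one can jump to the other. For adjacent $x,y$: $\phi(x,y)=\lim_{\beta\to\infty}\frac1\beta\log k(x\to y)$, $\Gamma(x)=-\max_y\phi(x,y)$, $U(x,y)=-\phi(x,y)-\Gamma(x)$; $y$ is a preferred successor of $x$ if $U(x,y)=0$. For a path $D=(x_0,\dots,x_n)$ of adjacent configurations, $U(D)=\sum_m U(x_m,x_{m+1})$, and $\mathcal{U}(x,y)$ is the minimum of $U(D)$ over paths from $x$ to $y$. A non-empty set $A$ is an attractor if $\mathcal{U}(x,y)=0$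 for all $x\neq y\in A$ and $\mathcal{U}(x,y)>0$ for all $x\in A$, $y\notin A$. Writing a configuration by its blocks $(p_0,q_0,\dots,p_n,q_n)$ ($p_0$ occupied sites from site 1, then $q_0$ vacant, then $p_1$ occupied, etc.), $\mathcal{P}$ is the set of configurations with $p_i\geq 3$ for all $i$, $q_i\geq 3$ for $i<n$, and $q_n\geq 2$. *)

From HB Require Import structures.
From mathcomp Require Import all_boot all_order all_algebra.
From mathcomp Require Import all_classical all_reals all_analysis.
Set Implicit Arguments. Unset Strict Implicit. Unset Printing Implicit Defensive.
Import Order.TTheory GRing.Theory Num.Theory.
Import numFieldNormedType.Exports.
Local Open Scope ring_scope.
Local Open Scope classical_set_scope.

Section Kawasaki.
Variables (R : realType) (N : nat) (kappa muL muR : R).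

(* Configurations x in {0,1}^N; site s (1 <= s <= N) is the ordinal s-1. *)
Definition config := {ffun 'I_N -> bool}.

Definition occ (x : config) (i : nat) : bool :=
  if insub i is Some j then x j else false.

Definition energy (x : config) : R :=
  - kappa * \sum_(i < N.-1) ((occ x i && occ x i.+1) : nat)%:R.

Definition swap (x : config) (i j : 'I_N) : config :=
  [ffun k => if k == i then x j else if k == j then x i else x k].

Definition flip (x : config) (i : 'I_N) : config :=
  [ffun k => if k == i then ~~ x k else x k].

Definition boundary (i : 'I_N) : bool := (val i == 0%N) || (val i == N.-1).

Definition mu (i : 'I_N) : R := if val i == 0%N then muL else muR.

Definition rate (beta : R) (x y : config) : R :=
  \sum_(i : 'I_N) \sum_(j : 'I_N | (val j == (val i).+1) && (x i != x j)
                                    && (swap x i j == y))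
      expR (- (beta / 2) * (energy (swap x i j) - energy x))
  + \sum_(i : 'I_N | boundary i && (flip x i == y))
      (expR (beta * mu i / 2 * (1 - 2 * (x i : nat)%:R))
       * expR (- (beta / 2) * (energy (flip x i) - energy x))).

Definition can_jump (x y : config) : bool :=
  [exists i : 'I_N, exists j : 'I_N,
     (val j == (val i).+1) && (x i != x j) && (swap x i j == y)]
  || [exists i : 'I_N, boundary i && (flip x i == y)].

Definition adjacent (x y : config) : bool := can_jump x y || can_jump y x.

Definition phi (x y : config) : R :=
  lim ((fun beta : R => ln (rate beta x y) / beta) @ +oo).

Definition Gamma (x : config) : R :=
  - sup [set phi x y | y in [set y | adjacent x y]].

Definition U (x y : config) : R := - phi x y - Gamma x.

Definition preferred_successor (x y : config) : Prop :=
  adjacent x y /\ U x y = 0.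

(* U(D) for the path D = x :: D' *)
Definition path_cost (x : config) (D' : seq config) : R :=
  \sum_(c <- pairmap U x D') c.

Definition is_path (x y : config) (D' : seq config) : Prop :=
  path adjacent x D' /\ last x D' = y.

Definition calU (x y : config) : R :=
  inf [set path_cost x D' | D' in [set D' | is_path x y D']].

Definition attractor (A : set config) : Prop :=
  A !=set0 /\
  (forall x y, A x -> A y -> x <> y -> calU x y = 0) /\
  (forall x y, A x -> ~ A y -> 0 < calU x y).

Definition Aset (x : config) : set config :=
  [set y | y = x \/ preferred_successor x y].

End Kawasaki.

Definition occ_seq (N : nat) (x : config N) : seq bool := map x (enum 'I_N).

(* block description (p_0,q_0,...,p_n,q_n) *)
Definition blocks_seq (b : seq (nat * nat)) : seq bool :=
  flatten [seq nseq p.1 true ++ nseq p.2 false | p <- b].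

Definition inP (N : nat) (x : config N) : Prop :=
  exists b : seq (nat * nat),
    [/\ b != [::], occ_seq x = blocks_seq b,
        all (fun p => 3 <= p.1)%N b,
        all (fun p => 3 <= p.2)%N (take (size b).-1 b)
      & (2 <= (last (0%N, 0%N) b).2)%N].

(* A configuration of [\mathcal P] consists of runs of length at least three, so an
   exchange across a wall destroys exactly one bond and creates none: all exchanges have
   [phi = -kappa/2], while the boundary flips are strictly more expensive because
   [mu_L > 0] and [mu_R < -kappa].  Hence [Gamma x = kappa/2] and the preferred successors
   of [x] are exactly its exchanges.  From an exchanged configuration [z] the way back
   restores the bond ([phi = kappa/2]) whereas every other move has [phi <= 0]; so [z]
   returns to [x] at zero cost and any other move from [z] costs at least [kappa/2].
   Thus [A_x] is internally connected at zero cost and every exit costs a fixed positive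
   amount.  Two basins cannot meet: a shared exchanged configuration would have two
   distinct moves with [phi = kappa/2], and [x] cannot be an exchange of another [y],
   since then the move back to [y] would have [phi = kappa/2 > -kappa/2]. *)

From mathcomp Require Import all_boot all_order all_algebra.
From mathcomp Require Import all_classical all_reals all_analysis.
From mathcomp Require Import zify ring lra.
Import Order.TTheory GRing.Theory Num.Theory.

Set Implicit Arguments.
Unset Strict Implicit.
Unset Printing Implicit Defensive.

Ltac decide_nat_tests := repeat match goal with
  | |- context [if ?c then _ else _] =>
      first [ rewrite (_ : c = true); last by lia
            | rewrite (_ : c = false); last by lia ]
  | |- context [@eq_op ?T ?a ?b] =>
      first [ rewrite (_ : @eq_op T a b = true); last by lia
            | rewrite (_ : @eq_op T a b = false); last by lia ]
  | |- context [leq ?a ?b] =>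
      first [ rewrite (_ : leq a b = true); last by lia
            | rewrite (_ : leq a b = false); last by lia ]
  end.

Section Bonds.
Implicit Types (f : nat -> bool) (i k n : nat).

Definition swap_at f i k := if k == i then f i.+1 else if k == i.+1 then f i else f k.
Definition flip_at f i k := if k == i then ~~ f i else f k.

Definition bonds f n := (\sum_(0 <= k < n) (f k && f k.+1))%N.

(* The reservoir to the left of site [0] counts as vacant. *)
Definition left_occ f i := (0 < i) && f i.-1.

Definition swap_gain f i := ((left_occ f i && f i.+1) + (f i && f i.+2))%N.
Definition swap_loss f i := ((left_occ f i && f i) + (f i.+1 && f i.+2))%N.
Definition flip_gain f i := ((left_occ f i && ~~ f i) + (~~ f i && f i.+1))%N.
Definition flip_loss f i := ((left_occ f i && f i) + (f i && f i.+1))%N.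

Lemma big_nat_eq_outside (F G : nat -> nat) a b n : (a <= b <= n)%N ->
  (forall k, (k < a)%N \/ (b <= k)%N -> F k = G k) ->
  (\sum_(0 <= k < n) F k + \sum_(a <= k < b) G k =
   \sum_(0 <= k < n) G k + \sum_(a <= k < b) F k)%N.
Proof.
move=> /andP[hab hbn] FG.
have split3 H : (\sum_(0 <= k < n) H k =
    \sum_(0 <= k < a) H k + \sum_(a <= k < b) H k + \sum_(b <= k < n) H k)%N.
  by rewrite -!big_cat_nat //; apply: leq_trans hbn.
rewrite !split3.
have -> : (\sum_(0 <= k < a) F k = \sum_(0 <= k < a) G k)%N.
  by apply: eq_big_nat => k /andP[_ hk]; apply: FG; left.
have -> : (\sum_(b <= k < n) F k = \sum_(b <= k < n) G k)%N.
  by apply: eq_big_nat => k /andP[hk _]; apply: FG; right.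
lia.
Qed.

Lemma big_nat2 (F : nat -> nat) i : (\sum_(i <= k < i.+2) F k = F i + F i.+1)%N.
Proof. by rewrite big_ltn ?big_nat1. Qed.

Lemma big_nat3 (F : nat -> nat) i :
  (\sum_(i <= k < i.+3) F k = F i + F i.+1 + F i.+2)%N.
Proof. by rewrite big_ltn ?big_nat2 ?addnA //; lia. Qed.

Lemma bonds_swap_at f n i : (i.+1 < n)%N ->
  (bonds (swap_at f i) n + swap_loss f i = bonds f n + swap_gain f i)%N.
Proof.
move=> hi.
have hwin : (i.-1 <= i.+2 <= n)%N by lia.
have outside k : (k < i.-1)%N \/ (i.+2 <= k)%N ->
    ((swap_at f i k && swap_at f i k.+1) : nat) = (f k && f k.+1 : nat).
  by move=> hk; rewrite /swap_at; decide_nat_tests.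
have := big_nat_eq_outside hwin outside; rewrite -/(bonds _ n) -/(bonds f n).
rewrite /swap_gain /swap_loss /left_occ /swap_at.
case: i hi {hwin outside} => [|i] hi /=; rewrite ?big_nat2 ?big_nat3; decide_nat_tests.
  by case: (f 0); case: (f 1); case: (f 2) => /=; lia.
by case: (f i); case: (f i.+1); case: (f i.+2); case: (f i.+3) => /=; lia.
Qed.

Lemma bonds_flip_at f n i : (i < n)%N ->
  (bonds (flip_at f i) n + flip_loss f i = bonds f n + flip_gain f i)%N.
Proof.
move=> hi.
have hwin : (i.-1 <= i.+1 <= n)%N by lia.
have outside k : (k < i.-1)%N \/ (i.+1 <= k)%N ->
    ((flip_at f i k && flip_at f i k.+1) : nat) = (f k && f k.+1 : nat).
  by move=> hk; rewrite /flip_at; decide_nat_tests.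
have := big_nat_eq_outside hwin outside; rewrite -/(bonds _ n) -/(bonds f n).
rewrite /flip_gain /flip_loss /left_occ /flip_at.
case: i hi {hwin outside} => [|i] hi /=; rewrite ?big_nat1 ?big_nat2; decide_nat_tests.
  by case: (f 0); case: (f 1) => /=; lia.
by case: (f i); case: (f i.+1); case: (f i.+2) => /=; lia.
Qed.

End Bonds.

Section LongRuns.
Implicit Types (f : nat -> bool) (p q i j n : nat).

(* What the proof uses of [\mathcal P]: runs of length at least three, the first one
   occupied and the last two sites vacant. *)
Record long_runs f n : Prop := {
  long_runs_head : [&& f 0, f 1 & f 2];
  long_runs_tail : ~~ f n.-2 && ~~ f n.-1;
  long_runs_wall : forall j, (j.+1 < n)%N -> f j != f j.+1 ->
    [/\ (2 <= j)%N, f j.-2 = f j, f j.-1 = f j, f j.+2 = f j.+1 & f j.+3 = f j.+1] }.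

Definition prepend_block p q f i :=
  if (i < p)%N then true else if (i < p + q)%N then false else f (i - (p + q)).

Lemma prepend_block_shift p q f i : prepend_block p q f (p + q + i) = f i.
Proof. by rewrite /prepend_block; decide_nat_tests; rewrite addKn. Qed.

Lemma long_runs_prepend p q f n : (3 <= p)%N ->
  (f =1 (fun=> false) /\ n = 0 /\ (2 <= q)%N) \/ ((3 <= q)%N /\ long_runs f n) ->
  long_runs (prepend_block p q f) (p + q + n).
Proof.
move=> hp hf; have hq : (2 <= q)%N by case: hf => [[_ []]|[]] //; lia.
split.
- by rewrite /prepend_block; decide_nat_tests.
- case: hf => [[_ [-> _]]|[_ [hd tl _]]].
    by rewrite /prepend_block addn0; decide_nat_tests.
  have n3 : (2 < n)%N.
    by move: hd tl; case: n => [|[|[|n]]] //=; case: (f 0); case: (f 1).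
  have -> : (p + q + n).-2 = p + q + n.-2 by lia.
  have -> : (p + q + n).-1 = p + q + n.-1 by lia.
  by rewrite !prepend_block_shift.
move=> j hj; have : [|| (j.+1 < p)%N || (p <= j < (p + q).-1)%N, j.+1 == p,
    j.+1 == p + q | (p + q <= j)%N] by lia.
case/or4P=> [/orP[hjp|/andP[hjp hjq]]|/eqP hjp|/eqP hjq|hjq].
- by rewrite /prepend_block; decide_nat_tests.
- by rewrite /prepend_block; decide_nat_tests.
- rewrite /prepend_block; decide_nat_tests => _; split => //.
  case: (ltnP j.+3 (p + q)) => // h3.
  case: hf => [[f0 _]|[hq3 _]]; [exact: f0 | lia].
- case: hf => [[_ [n0 _]]|[hq3 [hd _ _]]]; first lia.
  rewrite /prepend_block; decide_nat_tests => _.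
  have -> : j.+1 - (p + q) = 0 by lia.
  have -> : j.+2 - (p + q) = 1 by lia.
  have -> : j.+3 - (p + q) = 2 by lia.
  by move: hd => /and3P[-> -> ->]; split => //; lia.
case: hf => [[_ [n0 _]]|[_ [_ _ wall]]]; first lia.
have [i ji] : exists i, j = p + q + i by exists (j - (p + q)); lia.
subst j.
rewrite -addnS !prepend_block_shift => hne.
have [i2 e2 e1 e3 e4] := wall i (ltac:(lia)) hne.
have -> : (p + q + i).-2 = p + q + i.-2 by lia.
have -> : (p + q + i).-1 = p + q + i.-1 by lia.
by rewrite -!addnS !prepend_block_shift; split => //; lia.
Qed.

Lemma nth_blocks_seq_cons p q b :
  nth false (blocks_seq ((p, q) :: b)) =1 prepend_block p q (nth false (blocks_seq b)).
Proof.
move=> i; rewrite /blocks_seq /= -catA !nth_cat !size_nseq !nth_nseq /prepend_block.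
case: (ltnP i p) => // hip.
have -> : (i - p < q)%N = (i < p + q)%N by apply/idP/idP; lia.
by rewrite if_same subnDA.
Qed.

Lemma long_runs_blocks b : b != [::] -> all (fun c => 3 <= c.1)%N b ->
  all (fun c => 3 <= c.2)%N (take (size b).-1 b) -> (2 <= (last (0, 0) b).2)%N ->
  long_runs (nth false (blocks_seq b)) (size (blocks_seq b)).
Proof.
elim: b => // [[p q] b IH] _ /= /andP[hp hps].
have -> : size (blocks_seq ((p, q) :: b)) = p + q + size (blocks_seq b).
  by rewrite /blocks_seq /= !size_cat !size_nseq; lia.
rewrite (funext (nth_blocks_seq_cons p q b)).
case: b IH hps => [|c b] IH hps htake hlast.
  by apply: long_runs_prepend => //; left; split => // i; rewrite nth_nil.
move: htake => /= /andP[hq htake].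
by apply: long_runs_prepend => //; right; split => //; apply: IH.
Qed.

End LongRuns.

Lemma nth_occ_seq N (x : config N) k : nth false (occ_seq x) k = occ x k.
Proof.
rewrite /occ_seq /occ; case: insubP => [i ik <-|ik].
  by rewrite (nth_map i) ?nth_ord_enum // size_enum_ord ltn_ord.
by rewrite nth_default // size_map size_enum_ord leqNgt.
Qed.

Lemma long_runs_occ N (x : config N) : inP x -> long_runs (occ x) N.
Proof.
move=> [b [bne hx h1 h2 h3]].
have := long_runs_blocks bne h1 h2 h3.
by rewrite -hx size_map size_enum_ord (funext (nth_occ_seq x)).
Qed.

Section Walls.
Implicit Types (f : nat -> bool) (i j k n : nat).

Lemma exists_wall f n : f 0 -> ~~ f n -> exists2 j, (j < n)%N & f j != f j.+1.
Proof.
elim: n => [|n IH] f0 fn; first by rewrite f0 in fn.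
case fn': (f n); first by exists n; rewrite // fn'; case: (f n.+1) fn.
by have [j jn fj] := IH f0 (negbT fn'); exists j => //; lia.
Qed.

Lemma swap_gain_local f g i : (forall k, (i.-1 <= k <= i.+2)%N -> f k = g k) ->
  swap_gain f i = swap_gain g i /\ swap_loss f i = swap_loss g i.
Proof. by move=> fg; split; rewrite /swap_gain /swap_loss /left_occ !fg //; lia. Qed.

Lemma long_runs_swap_gain f n j : long_runs f n -> (j.+1 < n)%N -> f j != f j.+1 ->
  swap_gain f j = 0%N /\ swap_loss f j = 1%N.
Proof.
move=> f_runs jn fj; have [j2 e2 e1 e3 e4] := long_runs_wall f_runs jn fj.
rewrite /swap_gain /swap_loss /left_occ e1 e3; decide_nat_tests.
by move: fj; case: (f j); case: (f j.+1).
Qed.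

Section AtWall.
Variables (f : nat -> bool) (n j : nat).
Hypotheses (f_runs : long_runs f n) (jn : (j.+1 < n)%N) (fj : f j != f j.+1).

Lemma long_runs_swap_back : swap_gain (swap_at f j) j = 1%N /\ swap_loss (swap_at f j) j = 0%N.
Proof.
have [j2 e2 e1 e3 e4] := long_runs_wall f_runs jn fj.
rewrite /swap_gain /swap_loss /left_occ /swap_at; decide_nat_tests; rewrite e1 e3.
by move: fj; case: (f j); case: (f j.+1).
Qed.

Lemma long_runs_swap_other j' : j' != j -> (j'.+1 < n)%N ->
  swap_at f j j' != swap_at f j j'.+1 ->
  (swap_gain (swap_at f j) j' <= swap_loss (swap_at f j) j')%N.
Proof.
move=> j'j j'n hj'.
have [j2 e2 e1 e3 e4] := long_runs_wall f_runs jn fj.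
have [far|near] := boolP ((j'.+3 <= j) || (j.+3 <= j'))%N.
  have fg k : (j'.-1 <= k <= j'.+2)%N -> f k = swap_at f j k.
    by move=> hk; rewrite /swap_at; decide_nat_tests.
  have [<- <-] := swap_gain_local fg.
  have fj' : f j' != f j'.+1 by rewrite !fg //; lia.
  by have [-> _] := long_runs_swap_gain f_runs j'n fj'.
have [k jk] : exists k, j = k.+2 by exists j.-2; lia.
subst j; have : j' = k \/ j' = k.+1 \/ j' = k.+3 \/ j' = k.+4 by lia.
case=> [->|[->|[->|->]]]; move: hj'; rewrite /swap_gain /swap_loss /left_occ /swap_at; decide_nat_tests;
  rewrite /= ?e2 ?e1 ?e3 ?e4; by move: fj; case: (f k.+2); case: (f k.+3).
Qed.

Lemma long_runs_swap_ends : swap_at f j 0 /\ ~~ swap_at f j n.-1.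
Proof.
have [j2 _ _ _ _] := long_runs_wall f_runs jn fj.
have /and3P[f0 _ _] := long_runs_head f_runs.
have /andP[fn2 fn1] := long_runs_tail f_runs.
have jn2 : (j.+2 < n)%N.
  rewrite ltnNge; apply/negP => nj; have ej : j = n.-2 by lia.
  move: fj; rewrite ej (_ : n.-2.+1 = n.-1); last by lia.
  by rewrite (negbTE fn2) (negbTE fn1).
by rewrite /swap_at; decide_nat_tests.
Qed.

End AtWall.
End Walls.

Section Moves.
Variable N : nat.
Implicit Types (x y : config N) (I J K : 'I_N).

Lemma occ_ord x I : occ x I = x I.
Proof. by rewrite /occ valK. Qed.

Lemma occ_ge x k : (N <= k)%N -> occ x k = false.
Proof. by move=> kN; rewrite /occ insubN // -leqNgt. Qed.

Lemma occ_swap x I J : (J : nat) = I.+1 -> occ (swap x I J) = swap_at (occ x) I.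
Proof.
move=> hJ; apply: funext => k; rewrite /swap_at -hJ !occ_ord {1}/occ.
case: insubP => [K _ <-|kN]; first by rewrite ffunE occ_ord.
have := ltn_ord I; have := ltn_ord J; rewrite -leqNgt in kN => hI hJN.
by decide_nat_tests; rewrite occ_ge.
Qed.

Lemma occ_flip x K : occ (flip x K) = flip_at (occ x) K.
Proof.
apply: funext => k; rewrite /flip_at occ_ord {1}/occ.
case: insubP => [K' _ <-|kN].
  rewrite ffunE occ_ord; case: (K' =P K) => [->|nK]; first by rewrite eqxx.
  by rewrite ifF //; apply/eqP => /val_inj.
have := ltn_ord K; rewrite -leqNgt in kN => hK.
by decide_nat_tests; rewrite occ_ge.
Qed.

Lemma swapK x I J : (J : nat) = I.+1 -> swap (swap x I J) I J = x.
Proof.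
move=> hJ; apply/ffunP => k; rewrite !ffunE eqxx.
have /negbTE -> : J != I by apply/eqP => e; move: hJ; rewrite e; lia.
by rewrite eqxx; case: (k =P I) => [->|_] //; case: (k =P J) => [->|_].
Qed.

Lemma flipK x K : flip (flip x K) K = x.
Proof. by apply/ffunP => k; rewrite !ffunE; case: (k =P K) => [->|_]; rewrite ?negbK. Qed.

Lemma swap_at_inj (f : nat -> bool) i i' : f i != f i.+1 -> f i' != f i'.+1 ->
  swap_at f i' =1 swap_at f i -> i' = i.
Proof.
move=> hi hi' e; apply/eqP/negPn/negP => ne.
have := e i'; have := e i'.+1; rewrite /swap_at eqxx.
case: (i' =P i.+1) => [ei|ni]; decide_nat_tests.
  by move=> e1 _; move: hi'; rewrite e1 eqxx.
by move=> _ e1; move: hi'; rewrite e1 eqxx.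
Qed.

Lemma flip_at_neq_swap_at (f : nat -> bool) i k : f i != f i.+1 ->
  ~ flip_at f k =1 swap_at f i.
Proof.
move=> hi e; have := e i; have := e i.+1; rewrite /swap_at /flip_at eqxx.
case: (i =P k) => [<-|nk]; decide_nat_tests.
  by move=> e1 _; move: hi; rewrite e1 eqxx.
by move=> _ e1; move: hi; rewrite e1 eqxx.
Qed.

Lemma swap_inj x I J I' J' : (J : nat) = I.+1 -> x I != x J ->
  (J' : nat) = I'.+1 -> x I' != x J' -> swap x I' J' = swap x I J -> I' = I.
Proof.
move=> hJ hIJ hJ' hIJ' /(congr1 (@occ N)); rewrite !occ_swap // => e.
apply: val_inj; apply: (@swap_at_inj (occ x)); last by rewrite e.
  by rewrite occ_ord -hJ occ_ord.
by rewrite occ_ord -hJ' occ_ord.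
Qed.

Lemma flip_neq_swap x I J K : (J : nat) = I.+1 -> x I != x J -> flip x K != swap x I J.
Proof.
move=> hJ hIJ; apply/eqP => /(congr1 (@occ N)); rewrite occ_flip occ_swap // => e.
apply: (@flip_at_neq_swap_at (occ x) I K); last by rewrite e.
by rewrite occ_ord -hJ occ_ord.
Qed.

Lemma flip_inj x K K' : flip x K' = flip x K -> K' = K.
Proof. by move=> /ffunP /(_ K'); rewrite !ffunE eqxx; case: eqP => // _; case: (x K'). Qed.

Lemma swap_neq x I J : (J : nat) = I.+1 -> x I != x J -> swap x I J I != swap x I J J.
Proof.
move=> hJ hIJ; have hJI : J != I by apply/eqP => /(congr1 (@nat_of_ord N)); lia.
by rewrite !ffunE !eqxx (negbTE hJI) eq_sym.
Qed.

Lemma can_jump_swap x I J : (J : nat) = I.+1 -> x I != x J -> can_jump x (swap x I J).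
Proof.
move=> hJ hIJ; apply/orP; left; apply/existsP; exists I; apply/existsP; exists J.
by rewrite hIJ eqxx !andbT; apply/eqP.
Qed.

Lemma can_jump_flip x K : boundary K -> can_jump x (flip x K).
Proof. by move=> hK; apply/orP; right; apply/existsP; exists K; rewrite hK eqxx. Qed.

Lemma adjacent_swap x I J : (J : nat) = I.+1 -> x I != x J -> adjacent x (swap x I J).
Proof. by move=> hJ hIJ; rewrite /adjacent can_jump_swap. Qed.

Lemma adjacent_flip x K : boundary K -> adjacent x (flip x K).
Proof. by move=> hK; rewrite /adjacent can_jump_flip. Qed.

Variant move_spec x y : Prop :=
  | MoveSwap I J of (J : nat) = I.+1 & x I != x J & y = swap x I J
  | MoveFlip K of boundary K & y = flip x K.

Lemma can_jumpP x y : can_jump x y -> move_spec x y.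
Proof.
case/orP => [/existsP[I /existsP[J /andP[/andP[/eqP hJ hIJ] /eqP <-]]]|].
  exact: (MoveSwap hJ hIJ).
by case/existsP => K /andP[hK /eqP <-]; exact: (MoveFlip hK).
Qed.

(* Both moves are involutions, so adjacency is witnessed by a move from either end. *)
Lemma adjacentP x y : adjacent x y -> move_spec x y.
Proof.
case/orP => [/can_jumpP //|/can_jumpP[I J hJ hIJ ->|K hK ->]].
  by apply: (MoveSwap hJ); rewrite ?swapK ?swap_neq.
by apply: (MoveFlip hK); rewrite flipK.
Qed.

End Moves.

Section Irreducibility.
Variable N : nat.
Implicit Types (x y : config N) (I J K : 'I_N).

Definition empty_config : config N := [ffun => false].

(* Decreases when the leftmost particle hops left or leaves through site [0]. *)
Definition weight x := (\sum_(k : 'I_N) (x k : nat) * k.+1)%N.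

Lemma weight_flip x K : x K -> weight x = (weight (flip x K) + K.+1)%N.
Proof.
move=> xK; rewrite /weight (bigD1 K) //= [in RHS](bigD1 K) //= ffunE eqxx xK /=.
under [in RHS]eq_bigr => k nk do rewrite ffunE (negbTE nk).
by rewrite mul1n mul0n add0n addnC.
Qed.

Lemma weight_swap x I J : (J : nat) = I.+1 -> ~~ x I -> x J ->
  weight x = (weight (swap x I J)).+1.
Proof.
move=> hJ xI xJ; have hJI : J != I by apply/eqP => /(congr1 (@nat_of_ord N)); lia.
rewrite /weight (bigD1 I) //= [in RHS](bigD1 I) //= (bigD1 J) //= [in RHS](bigD1 J) //=.
under [in RHS]eq_bigr => k /andP[nI nJ] do rewrite ffunE (negbTE nI) (negbTE nJ).
rewrite !ffunE eqxx (negbTE hJI) eqxx (negbTE xI) xJ hJ /=; lia.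
Qed.

Lemma exists_lighter_neighbour x : x != empty_config ->
  exists2 y, adjacent x y & (weight y < weight x)%N.
Proof.
move=> x0.
have [i xi] : exists i, occ x i.
  case: (pickP x) => [k xk|x_empty]; first by exists k; rewrite occ_ord.
  by move: x0; rewrite (_ : x = empty_config) ?eqxx //; apply/ffunP => k; rewrite ffunE x_empty.
have [n xn nmin] := ex_minnP (ex_intro _ i xi).
have nN : (n < N)%N by rewrite ltnNge; apply: contraL xn => /occ_ge ->.
case: n xn nmin nN => [|m] xm mmin mN.
  have xK : x (Ordinal mN) by rewrite -occ_ord.
  exists (flip x (Ordinal mN)); first by apply: adjacent_flip; rewrite /boundary eqxx.
  by rewrite (weight_flip xK) addn1.
have m'N : (m < N)%N by lia.
have xI : ~~ x (Ordinal m'N).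
  by rewrite -occ_ord; apply/negP => /mmin /=; rewrite ltnn.
have xJ : x (Ordinal mN) by rewrite -occ_ord.
exists (swap x (Ordinal m'N) (Ordinal mN)); first by apply: adjacent_swap => //; rewrite (negbTE xI) xJ.
by rewrite (@weight_swap x (Ordinal m'N) (Ordinal mN)).
Qed.

Lemma connect_empty x : connect (@adjacent N) x empty_config.
Proof.
elim: {x}(weight x) {-2}x (leqnn (weight x)) => [|w IH] x xw;
  case: (eqVneq x empty_config) => [->|x0]; rewrite ?connect0 //;
  have [y xy yw] := exists_lighter_neighbour x0; first lia.
by apply: connect_trans (connect1 xy) (IH _ _); lia.
Qed.

Lemma exists_path x y : exists D, is_path x y D.
Proof.
have /connectP[D xD ->] : connect (@adjacent N) x y.
  apply: connect_trans (connect_empty x) _.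
  by rewrite (sym_connect_sym (fun u v => orbC _ _)) connect_empty.
by exists D.
Qed.

End Irreducibility.

Local Open Scope ring_scope.
Local Open Scope classical_set_scope.

Section Rates.
Variables (R : realType) (N : nat) (kappa muL muR : R).
Implicit Types (x y : config N) (I J K : 'I_N).

Lemma energy_bonds x : energy kappa x = - kappa * (bonds (occ x) N)%:R.
Proof.
rewrite /energy /bonds -natr_sum -(big_mkord xpredT (fun i => (occ x i && occ x i.+1 : nat))).
case: N x => [|n] x //=; congr (_ * _%:R).
by rewrite big_nat_recr //= (occ_ge x (leqnn n.+1)) andbF addn0.
Qed.

Lemma rate_swap x I J beta : (J : nat) = I.+1 -> x I != x J ->
  rate kappa muL muR beta x (swap x I J) =
  expR (- (beta / 2) * (energy kappa (swap x I J) - energy kappa x)).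
Proof.
move=> hJ hIJ; rewrite /rate [X in _ + X]big1 ?addr0; last first.
  by move=> K /andP[_ /eqP e]; move: (flip_neq_swap K hJ hIJ); rewrite e eqxx.
rewrite (bigD1 I) //= [X in _ + X]big1 ?addr0; last first.
  move=> I' nI'; apply: big1 => J' /andP[/andP[/eqP hJ' hIJ'] /eqP e].
  by move: nI'; rewrite (swap_inj hJ hIJ hJ' hIJ' e) eqxx.
rewrite (big_pred1 J) // => J' /=; apply/idP/idP.
  by move=> /andP[/andP[/eqP hJ' _] _]; apply/eqP/val_inj => /=; rewrite hJ' hJ.
by move=> /eqP ->; rewrite hIJ eqxx !andbT; apply/eqP.
Qed.

Lemma rate_flip x K beta : boundary K ->
  rate kappa muL muR beta x (flip x K) =
  expR (beta * mu muL muR K / 2 * (1 - 2 * (x K : nat)%:R))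
  * expR (- (beta / 2) * (energy kappa (flip x K) - energy kappa x)).
Proof.
move=> hK; rewrite /rate big1 ?add0r; last first.
  move=> I _; apply: big1 => J /andP[/andP[/eqP hJ hIJ] /eqP e].
  by move: (flip_neq_swap K hJ hIJ); rewrite e eqxx.
rewrite (big_pred1 K) // => K' /=; apply/idP/idP; first by move=> /andP[_ /eqP /flip_inj ->].
by move=> /eqP ->; rewrite hK eqxx.
Qed.

Lemma phi_eq_exponent x y c :
  (forall beta : R, 0 < beta -> rate kappa muL muR beta x y = expR (beta * c)) ->
  phi kappa muL muR x y = c.
Proof.
move=> hrate; rewrite /phi; apply: norm_lim_near_cst; near=> beta.
have beta0 : 0 < beta by near: beta; apply: nbhs_pinfty_gt; rewrite num_real.
by rewrite hrate // expRK mulrC mulrA mulVf ?mul1r ?gt_eqF.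
Unshelve. all: by end_near.
Qed.

Lemma phi_swap x I J : (J : nat) = I.+1 -> x I != x J ->
  phi kappa muL muR x (swap x I J) =
  kappa / 2 * ((swap_gain (occ x) I)%:R - (swap_loss (occ x) I)%:R).
Proof.
move=> hJ hIJ; apply: phi_eq_exponent => beta _; rewrite rate_swap //; congr expR.
have hIN : (I.+1 < N)%N by rewrite -hJ.
have e : (bonds (swap_at (occ x) I) N)%:R + (swap_loss (occ x) I)%:R
    = (bonds (occ x) N)%:R + (swap_gain (occ x) I)%:R :> R.
  by rewrite -!natrD bonds_swap_at.
rewrite !energy_bonds occ_swap //.
have -> : (bonds (swap_at (occ x) I) N)%:R = (bonds (occ x) N)%:R
    + (swap_gain (occ x) I)%:R - (swap_loss (occ x) I)%:R :> R by lra.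
ring.
Qed.

Lemma phi_flip x K : boundary K ->
  phi kappa muL muR x (flip x K) =
  mu muL muR K / 2 * (1 - 2 * (x K : nat)%:R)
  + kappa / 2 * ((flip_gain (occ x) K)%:R - (flip_loss (occ x) K)%:R).
Proof.
move=> hK; apply: phi_eq_exponent => beta _; rewrite rate_flip // -expRD; congr expR.
have e : (bonds (flip_at (occ x) K) N)%:R + (flip_loss (occ x) K)%:R
    = (bonds (occ x) N)%:R + (flip_gain (occ x) K)%:R :> R.
  by rewrite -!natrD bonds_flip_at.
rewrite !energy_bonds occ_flip.
have -> : (bonds (flip_at (occ x) K) N)%:R = (bonds (occ x) N)%:R
    + (flip_gain (occ x) K)%:R - (flip_loss (occ x) K)%:R :> R by lra.
ring.
Qed.

Lemma phi_flip_first x K : (K : nat) = 0%N -> x K ->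
  phi kappa muL muR x (flip x K) = - muL / 2 - kappa / 2 * (occ x 1 : nat)%:R.
Proof.
move=> hK xK; have x0 : occ x 0 by rewrite -hK occ_ord.
have bK : boundary K by apply/orP; left; apply/eqP.
rewrite phi_flip // (_ : mu muL muR K = muL); last by rewrite /mu ifT //; apply/eqP.
by rewrite /flip_gain /flip_loss /left_occ hK x0 xK /= add0n; lra.
Qed.

Lemma phi_flip_last x K : (1 < N)%N -> (K : nat) = N.-1 -> ~~ x K ->
  phi kappa muL muR x (flip x K) = muR / 2 + kappa / 2 * (occ x N.-2 : nat)%:R.
Proof.
move=> N1 hK xK; have xN : ~~ occ x N.-1 by rewrite -hK occ_ord.
have bK : boundary K by apply/orP; right; apply/eqP.
rewrite phi_flip // (_ : mu muL muR K = muR); last first.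
  by rewrite /mu ifF //; apply/eqP; change (nat_of_ord K <> 0%N); lia.
rewrite /flip_gain /flip_loss /left_occ hK (negbTE xN) (negbTE xK).
rewrite (_ : (0 < N.-1)%N = true); last by lia.
rewrite (@occ_ge _ x N.-1.+1); last by lia.
by rewrite /= andbT andbF /=; lra.
Qed.

End Rates.

Section Costs.
Variables (R : realType) (N : nat) (kappa muL muR : R).
Implicit Types (x y u v : config N) (D : seq (config N)) (A : set (config N)).

Local Notation phi := (phi kappa muL muR).
Local Notation Gamma := (Gamma kappa muL muR).
Local Notation U := (U kappa muL muR).
Local Notation path_cost := (path_cost kappa muL muR).
Local Notation calU := (calU kappa muL muR).

Lemma Gamma_eq_max x g : (exists2 y, adjacent x y & phi x y = g) ->
  (forall y, adjacent x y -> phi x y <= g) -> Gamma x = - g.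
Proof.
move=> [y0 xy0 <-] hmax; rewrite /Gamma; congr (- _); apply/eqP; rewrite eq_le.
apply/andP; split; first by apply: ge_sup; [exists (phi x y0), y0 | move=> _ [y xy <-]; exact: hmax].
by apply: ub_le_sup; [exists (phi x y0) => _ [y xy <-]; exact: hmax | exists y0].
Qed.

Lemma U_ge0 x y : adjacent x y -> 0 <= U x y.
Proof.
move=> xy; rewrite /U /Gamma subr_ge0 lerN2.
apply: ub_le_sup; last by exists y.
exists (\sum_(z : config N) `|phi x z|) => _ [z _ <-].
by rewrite (le_trans (ler_norm _)) // (bigD1 z) //= lerDl sumr_ge0.
Qed.

Lemma path_cost_cons x y D : path_cost x (y :: D) = U x y + path_cost y D.
Proof. by rewrite /path_cost /= big_cons. Qed.

Lemma path_cost_ge0 x D : path (@adjacent N) x D -> 0 <= path_cost x D.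
Proof.
elim: D x => [|y D IH] x /=; first by rewrite /path_cost big_nil.
by move=> /andP[xy yD]; rewrite path_cost_cons addr_ge0 ?U_ge0 ?IH.
Qed.

Lemma calU_eq0 x y D : is_path x y D -> path_cost x D = 0 -> calU x y = 0.
Proof.
move=> [xD <-] D0; apply/eqP; rewrite eq_le; apply/andP; split.
  by apply: ge_inf; [exists 0 => _ [D' [xD' _] <-]; exact: path_cost_ge0 | exists D].
by apply: lb_le_inf; [exists 0, D | move=> _ [D' [xD' _] <-]; exact: path_cost_ge0].
Qed.

Section Exit.
Variables (A : set (config N)) (m : R).
Hypothesis exit_ge : forall u v, A u -> ~ A v -> adjacent u v -> m <= U u v.

Lemma path_cost_exit_ge x D : A x -> path (@adjacent N) x D -> ~ A (last x D) ->
  m <= path_cost x D.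
Proof.
elim: D x => [|y D IH] x Ax //= /andP[xy yD] Dy; rewrite path_cost_cons.
have [Ay|Ay] := pselect (A y).
  by rewrite -[m]add0r lerD ?U_ge0 ?IH.
by rewrite -[m]addr0 lerD ?exit_ge ?path_cost_ge0.
Qed.

Lemma calU_exit_ge x y : A x -> ~ A y -> m <= calU x y.
Proof.
move=> Ax Ay; apply: lb_le_inf.
  by have [D xyD] := exists_path x y; exists (path_cost x D), D.
by move=> _ [D [xD Dy] <-]; apply: path_cost_exit_ge; rewrite ?Dy.
Qed.

End Exit.

End Costs.

Section Basin.
Variables (R : realType) (N : nat) (kappa muL muR : R).
Hypotheses (N1 : (1 < N)%N) (kappa0 : 0 < kappa) (muL0 : 0 < muL) (muR_lt : muR < - kappa).
Implicit Types (x y z v : config N) (I J K : 'I_N).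

Local Notation phi := (phi kappa muL muR).
Local Notation Gamma := (Gamma kappa muL muR).
Local Notation U := (U kappa muL muR).

(* [lra] does not look at section hypotheses, so they are handed over explicitly. *)
Ltac lra_params := move: kappa0 muL0 muR_lt => ? ? ?; lra.

Section LongRunConfig.
Variable x : config N.
Hypothesis x_runs : long_runs (occ x) N.

Lemma phi_swap_wall I J : (J : nat) = I.+1 -> x I != x J ->
  phi x (swap x I J) = - (kappa / 2).
Proof.
move=> hJ hIJ; have hIN : (I.+1 < N)%N by rewrite -hJ.
have xI : occ x I != occ x I.+1 by rewrite -hJ !occ_ord.
rewrite phi_swap //; have [-> ->] := long_runs_swap_gain x_runs hIN xI.
lra.
Qed.

Lemma phi_flip_long_runs K : boundary K ->
  phi x (flip x K) = - (muL + kappa) / 2 \/ phi x (flip x K) = muR / 2.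
Proof.
have /and3P[x0 x1 _] := long_runs_head x_runs.
have /andP[xN2 xN1] := long_runs_tail x_runs.
case/orP => /eqP hK.
  left; rewrite phi_flip_first ?x1 //=; first lra.
  by rewrite -occ_ord (hK : (K : nat) = 0%N).
right; rewrite phi_flip_last ?(negbTE xN2) //=; first lra.
by rewrite -occ_ord (hK : (K : nat) = N.-1).
Qed.

Lemma Gamma_long_runs : Gamma x = kappa / 2.
Proof.
have /and3P[x0 _ _] := long_runs_head x_runs.
have /andP[_ xN1] := long_runs_tail x_runs.
have [j jN xj] := exists_wall x0 xN1.
have jN' : (j < N)%N by lia.
have j1N : (j.+1 < N)%N by lia.
rewrite -[kappa / 2]opprK; apply: Gamma_eq_max.
  have hIJ : x (Ordinal jN') != x (Ordinal j1N) by rewrite -!occ_ord.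
  by exists (swap x (Ordinal jN') (Ordinal j1N)); rewrite ?adjacent_swap ?phi_swap_wall.
move=> y /adjacentP[I J hJ hIJ ->|K bK ->]; first by rewrite phi_swap_wall.
by case: (phi_flip_long_runs bK) => ->; lra_params.
Qed.

Lemma U_swap_wall I J : (J : nat) = I.+1 -> x I != x J -> U x (swap x I J) = 0.
Proof. by move=> hJ hIJ; rewrite /U Gamma_long_runs phi_swap_wall //; lra. Qed.

Lemma U_flip_long_runs K : boundary K ->
  U x (flip x K) = muL / 2 \/ U x (flip x K) = - (muR + kappa) / 2.
Proof. by rewrite /U Gamma_long_runs => /phi_flip_long_runs[->|->]; [left|right]; lra. Qed.

Lemma preferred_long_runs v : preferred_successor kappa muL muR x v ->
  exists I J, [/\ (J : nat) = I.+1, x I != x J & v = swap x I J].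
Proof.
move=> [/adjacentP[I J hJ hIJ ->|K bK ->] xv]; first by exists I, J.
by case: (U_flip_long_runs bK); rewrite xv => h; exfalso; lra_params.
Qed.

Section Swapped.
Variables I J : 'I_N.
Hypotheses (hJ : (J : nat) = I.+1) (hIJ : x I != x J).
Let z := swap x I J.

Let zI : z I != z J.
Proof. exact: swap_neq. Qed.

Let swap_z : swap z I J = x.
Proof. exact: swapK. Qed.

Lemma phi_swap_back : phi z x = kappa / 2.
Proof.
have hIN : (I.+1 < N)%N by rewrite -hJ.
have xI : occ x I != occ x I.+1 by rewrite -hJ !occ_ord.
rewrite -{1}swap_z phi_swap // /z occ_swap //.
by have [-> ->] := long_runs_swap_back x_runs hIN xI; lra.
Qed.

Lemma phi_swapped_le0 v : adjacent z v -> v <> x -> phi z v <= 0.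
Proof.
have hIN : (I.+1 < N)%N by rewrite -hJ.
have xI : occ x I != occ x I.+1 by rewrite -hJ !occ_ord.
have occ_z : occ z = swap_at (occ x) I by rewrite /z occ_swap.
have [z0 zN1] := long_runs_swap_ends x_runs hIN xI; rewrite -occ_z in z0 zN1.
case/adjacentP => [I' J' hJ' hzI' ->|K bK ->] vx.
  have nI : I' != I.
    apply/eqP => eI; apply: vx; subst I'.
    by rewrite (_ : J' = J) ?swap_z //; apply: ord_inj; rewrite hJ' hJ.
  have hI'N : (I'.+1 < N)%N by rewrite -hJ'.
  have zI' : occ z I' != occ z I'.+1 by rewrite -hJ' !occ_ord.
  rewrite occ_z in zI'; have := long_runs_swap_other x_runs hIN xI nI hI'N zI'.
  rewrite -(ler_nat R) -subr_le0 phi_swap // occ_z => le; have k2 : 0 < kappa / 2 by lra_params.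
  by rewrite pmulr_rle0.
case/orP: bK => /eqP hK.
  rewrite phi_flip_first //; last by rewrite -occ_ord (hK : (K : nat) = 0%N).
  by case: (occ z 1) => /=; lra_params.
rewrite phi_flip_last //; last by rewrite -occ_ord (hK : (K : nat) = N.-1).
by case: (occ z N.-2) => /=; lra_params.
Qed.

Lemma adjacent_swap_back : adjacent z x.
Proof. by rewrite -{1}swap_z adjacent_swap. Qed.

Lemma Gamma_swapped : Gamma z = - (kappa / 2).
Proof.
apply: Gamma_eq_max; first by exists x; rewrite ?phi_swap_back ?adjacent_swap_back.
move=> v zv; have [->|vx] := eqVneq v x; first by rewrite phi_swap_back.
by rewrite (le_trans (phi_swapped_le0 zv (elimN eqP vx))) //; lra_params.
Qed.

Lemma U_swap_back : U z x = 0.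
Proof. by rewrite /U Gamma_swapped phi_swap_back; lra. Qed.

Lemma U_swapped_ge v : adjacent z v -> v <> x -> kappa / 2 <= U z v.
Proof. by move=> zv vx; rewrite /U Gamma_swapped; have := phi_swapped_le0 zv vx; lra. Qed.

End Swapped.

Lemma preferred_back u : preferred_successor kappa muL muR x u -> adjacent u x /\ U u x = 0.
Proof.
by case/preferred_long_runs => I [J [hJ hIJ ->]]; rewrite adjacent_swap_back ?U_swap_back.
Qed.

Lemma Aset_calU0 u w : Aset kappa muL muR x u -> Aset kappa muL muR x w -> u <> w ->
  calU kappa muL muR u w = 0.
Proof.
have cost1 (a b : config N) : U a b = 0 -> path_cost kappa muL muR a [:: b] = 0.
  by move=> ab; rewrite path_cost_cons /path_cost big_nil ab addr0.
case=> [->|xu]; case=> [->|xw] uw; first by exfalso; apply: uw.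
- case: xw => xw Uxw; apply: (calU_eq0 (D := [:: w])); last exact: cost1.
  by split; rewrite //= xw.
- have [ux Uux] := preferred_back xu; apply: (calU_eq0 (D := [:: x])); last exact: cost1.
  by split; rewrite //= ux.
have [ux Uux] := preferred_back xu; case: xw => xw Uxw.
apply: (calU_eq0 (D := [:: x; w])); first by split; rewrite //= ux xw.
by rewrite path_cost_cons cost1 // Uux addr0.
Qed.

Lemma Aset_exit_ge u v : Aset kappa muL muR x u -> ~ Aset kappa muL muR x v -> adjacent u v ->
  Num.min (kappa / 2) (Num.min (muL / 2) (- (muR + kappa) / 2)) <= U u v.
Proof.
rewrite !ge_min => -[->|/preferred_long_runs[I [J [hJ hIJ ->]]]] Av uv.
  case/adjacentP: uv Av => [I J hJ hIJ ->|K bK ->] Av.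
    by exfalso; apply: Av; right; rewrite /preferred_successor adjacent_swap ?U_swap_wall.
  by case: (U_flip_long_runs bK) => ->; rewrite lexx ?orbT.
by rewrite U_swapped_ge // => vx; apply: Av; left.
Qed.

Lemma Aset_attractor : attractor kappa muL muR (Aset kappa muL muR x).
Proof.
split; first by exists x; left.
split; first exact: Aset_calU0.
move=> u y Au Ay; apply: lt_le_trans (calU_exit_ge Aset_exit_ge Au Ay).
by rewrite !lt_min; lra_params.
Qed.

End LongRunConfig.

Lemma Aset_disjoint x y : long_runs (occ x) N -> long_runs (occ y) N -> y <> x ->
  Aset kappa muL muR x `&` Aset kappa muL muR y = set0.
Proof.
move=> x_runs y_runs yx.
have no_preferred (a b : config N) : long_runs (occ a) N -> long_runs (occ b) N ->
    ~ preferred_successor kappa muL muR a b.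
  move=> a_runs b_runs /(preferred_long_runs a_runs)[I [J [hJ hIJ eb]]].
  have ea : a = swap b I J by rewrite eb swapK.
  have := phi_swap_back a_runs hJ hIJ.
  rewrite -eb ea phi_swap_wall //; last by rewrite eb swap_neq.
  by lra_params.
apply/seteqP; split => // v [[->|xv] [vy|yv]].
- by apply: yx.
- exact: (no_preferred y x y_runs x_runs).
- by apply: (no_preferred x y x_runs y_runs); rewrite -vy.
have [vy _] := preferred_back y_runs yv.
have [I [J [hJ hIJ ev]]] := preferred_long_runs x_runs xv.
have := phi_swapped_le0 x_runs hJ hIJ (v := y); rewrite -ev => /(_ vy yx).
have [I' [J' [hJ' hIJ' ->]]] := preferred_long_runs y_runs yv.
by rewrite phi_swap_back //; lra_params.
Qed.

End Basin.

Theorem corollary1 (R : realType) (N : nat) (kappa muL muR : R)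
  (hN : (5 <= N)%N) (hL : kappa < muL) (hk : 0 < kappa) (hR : muR < 0)
  (hRk : kappa < `|muR|) (x : config N) (hx : inP x) :
  attractor kappa muL muR (Aset kappa muL muR x) /\
  (forall y : config N, inP y -> y <> x ->
     Aset kappa muL muR x `&` Aset kappa muL muR y = set0).
Proof.
have N1 : (1 < N)%N by lia.
have muL0 : 0 < muL by lra.
have muR_lt : muR < - kappa by rewrite ltr0_norm // in hRk; lra.
split; first exact: (Aset_attractor N1 hk muL0 muR_lt (long_runs_occ hx)).
by move=> y hy; apply: (Aset_disjoint N1 hk muL0 muR_lt (long_runs_occ hx) (long_runs_occ hy)).
Qed.
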